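(* Let $r\geq2$ and let $G$ be a weighted $r$-graph of order $n$ with degrees $d_1,\ldots,d_n$. Then \[ \rho(G)^r\leq\big((r-1)!\big)^r\max_{\{i_1,\ldots,i_r\}\in E(G)}d_{i_1}\cdots d_{i_r}. \]
   Context: A weighted $r$-graph $G$ on vertex set $[n]$ is a function $G:[n]^{(r)}\to[0,\infty)$ on $r$-element subsets; its edge set is $E(G)=\{e: G(e)>0\}$. The degree of vertex $v$ is $d_v=\sum\{G(e):e\in E(G),\ v\in e\}$. The adjacency matrix $A(G)$ is the cubical $r$-matrix of order $n$ with $a_{i_1,\ldots,i_r}=G(\{i_1,\ldots,i_r\})$ if $\{i_1,\ldots,i_r\}\in E(G)$ (in particular the $i_j$ are distinct) and $0$ otherwise. $\rho(G)$ is the spectral radius of $A(G)$: the largest modulus of a complex $\lambda$ for which there is a nonzero $\mathbf{x}\in\mathbb{C}^n$ with $\lambda x_k^{r-1}=\sum_{i_2,\ldots,i_r}a_{k,i_2,\ldots,i_r}x_{i_2}\cdots x_{i_r}$ for all $k$; equivalently, $\rho(G)=\max\{|\sum a_{i_1,\ldots,i_r}x_{i_1}\cdots x_{i_r}|:\mathbf{x}\in\mathbb{R}^n,\ |\mathbf{x}|_r=1\}$. *)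

From HB Require Import structures.
From mathcomp Require Import all_boot all_order all_algebra.
From mathcomp Require Import boolp classical_sets reals.
Unset Printing Implicit Defensive.
Import Order.TTheory GRing.Theory Num.Theory.
Local Open Scope ring_scope.
Local Open Scope classical_set_scope.

(* A weighted r-graph on vertex set 'I_n is a function G on subsets of 'I_n,
   nonnegative, and vanishing off the r-element subsets (so it is a function
   on [n]^(r)). *)
Definition is_weighted_rgraph {R : realType} {n : nat} (r : nat) (G : {set 'I_n} -> R) :=
  (forall e : {set 'I_n}, 0 <= G e) /\ (forall e : {set 'I_n}, #|e| != r -> G e = 0).

Definition edges {R : realType} {n : nat} (r : nat) (G : {set 'I_n} -> R) : {set {set 'I_n}} :=
  [set e : {set 'I_n} | (#|e| == r) && (0 < G e)].

Definition degree {R : realType} {n : nat} (r : nat) (G : {set 'I_n} -> R) (v : 'I_n) : R :=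
  \sum_(e in edges r G | v \in e) G e.

(* Entries of the adjacency r-matrix A(G), indexed by i : 'I_r -> 'I_n
   (i.e. (i_1,...,i_r)): G({i_1..i_r}) if {i_1..i_r} is an edge
   (in particular the i_j are distinct), 0 otherwise. *)
Definition adj_entry {R : realType} {n : nat} (r : nat) (G : {set 'I_n} -> R)
  (i : {ffun 'I_r -> 'I_n}) : R :=
  if [set i k | k : 'I_r] \in edges r G then G [set i k | k : 'I_r] else 0.

Definition adj_form {R : realType} {n : nat} (r : nat) (G : {set 'I_n} -> R)
  (x : 'I_n -> R) : R :=
  \sum_(i : {ffun 'I_r -> 'I_n}) adj_entry r G i * \prod_(k < r) x (i k).

(* Spectral radius via the variational characterization given in the paper:
   rho(G) = max { |sum a x...x| : x in R^n, |x|_r = 1 }.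
   |x|_r = 1 is written as sum_i |x_i|^r = 1. *)
Definition rho {R : realType} {n : nat} (r : nat) (G : {set 'I_n} -> R) : R :=
  sup [set `|adj_form r G x| | x in [set x : 'I_n -> R | \sum_(i < n) `|x i| ^+ r = 1]].

(* Expanding the form over the r! orderings of each edge gives
   |A(G) x^r| <= r! * sum_e G(e) prod_(v in e) |x_v|.  For an edge e put
   y_v := |x_v|^r / d_v; if t^r bounds every product of degrees over an edge,
   AM-GM gives prod_(v in e) |x_v| = (prod y_v * prod d_v)^(1/r)
   <= (t / r) sum_(v in e) y_v.  Summing over edges with weights G(e) counts
   each y_v exactly d_v times, so the total is at most (t / r) sum_v |x_v|^r
   = t / r, and |A(G) x^r| <= (r-1)! t on the unit sphere of the r-norm. *)
From HB Require Import structures.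
From mathcomp Require Import all_boot all_order all_algebra.
From mathcomp Require Import boolp classical_sets reals.
Import Order.TTheory GRing.Theory Num.Theory.
Local Open Scope ring_scope.

Lemma card_ffun_imset_eq (D T : finType) (e : {set T}) : #|e| = #|D| ->
  #|[set f : {ffun D -> T} | [set f k | k : D] == e]| = (#|D|)`!.
Proof.
move=> card_e; rewrite -ffactnn -{1}card_e -card_inj_ffuns_on.
apply: eq_card => f; rewrite !inE; apply/eqP/andP => [im_f | [/ffun_onP f_e /injectiveP f_inj]].
- split; first by apply/ffun_onP => k; rewrite -im_f imset_f.
  have /imset_injP f_inj : #|[set f k | k : D]| == #|D| by rewrite im_f card_e.
  by apply/injectiveP => a b; apply: f_inj.
- apply/eqP; rewrite eqEcard card_imset // card_e leqnn andbT.
  by apply/fintype.subsetP => v /imsetP[k _ ->].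
Qed.

Lemma exists_nonneg_root (R : rcfType) (M : R) (r : nat) : 0 <= M -> (0 < r)%N ->
  exists2 t : R, 0 <= t & t ^+ r = M.
Proof.
move=> M_ge0 r_gt0; have M1_ge0 : 0 <= M + 1 by rewrite addr_ge0.
have [|t /andP[t_ge0 _]] := @poly_ivt _ ('X^r - M%:P) _ _ M1_ge0.
  rewrite !hornerE expr0n eqn0Ngt r_gt0 /= sub0r oppr_le0 M_ge0 /= subr_ge0.
  case: r r_gt0 => // r _; apply: (@le_trans _ _ (M + 1)); first by rewrite lerDl.
  by rewrite exprS ler_peMr // exprn_ege1 // lerDr.
by rewrite rootE !hornerE subr_eq0 => /eqP; exists t.
Qed.

Lemma AGM_prod_le_weighted_sum (R : realFieldType) (I : finType) (A : {set I})
    (a d : I -> R) (t : R) :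
  (0 < #|A|)%N -> (forall v, v \in A -> 0 <= a v) -> (forall v, v \in A -> 0 < d v) ->
  0 <= t -> \prod_(v in A) d v <= t ^+ #|A| ->
  \prod_(v in A) a v <= t / #|A|%:R * \sum_(v in A) a v ^+ #|A| / d v.
Proof.
move=> A_gt0 a_ge0 d_gt0 t_ge0 prod_d.
set r := #|A|; set y := fun v => a v ^+ r / d v.
have y_ge0 v : v \in A -> 0 <= y v
  by move=> vA; rewrite divr_ge0 ?exprn_ge0 ?a_ge0 ?ltW ?d_gt0.
have [AGM _] := leif_AGM y_ge0.
have prod_a_r : (\prod_(v in A) a v) ^+ r = \prod_(v in A) y v * \prod_(v in A) d v.
  by rewrite -big_split /= -prodrXl; apply: eq_bigr => v vA; rewrite divfK ?gt_eqF ?d_gt0.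
rewrite -(ler_pXn2r A_gt0) ?nnegrE ?prodr_ge0 ?mulr_ge0 ?divr_ge0 ?sumr_ge0 ?invr_ge0 //.
have -> : t / r%:R * \sum_(v in A) y v = (\sum_(v in A) y v) / r%:R * t.
  by rewrite mulrC mulrA mulrAC.
rewrite prod_a_r exprMn; apply: ler_pM AGM prod_d; first exact: prodr_ge0.
by apply: prodr_ge0 => v vA; rewrite ltW ?d_gt0.
Qed.

Lemma sup_ge0_le (R : realType) (S : set R) (B : R) :
  0 <= B -> (forall y, S y -> 0 <= y <= B) -> 0 <= sup S <= B.
Proof.
move=> B_ge0 S_bound; have ubB : ubound S B by move=> y /S_bound /andP[].
have [[y Sy] | S_empty] := pselect (exists y, S y); last first.
  have -> : S = set0 by apply/seteqP; split => [y Sy | y []]; case: S_empty; exists y.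
  by rewrite sup0 lexx.
rewrite ge_sup //; last by exists y.
have /andP[y_ge0 _] := S_bound y Sy; rewrite andbT (le_trans y_ge0) //.
by apply: sup_upper_bound => //; split; [exists y | exists B].
Qed.

Section WeightedGraph.
Variables (R : realType) (n r : nat) (G : {set 'I_n} -> R).
Hypothesis G_graph : is_weighted_rgraph r G.

Lemma edge_weight_gt0 {e} : e \in edges r G -> 0 < G e.
Proof. by rewrite inE => /andP[]. Qed.

Lemma card_edge {e} : e \in edges r G -> #|e| = r.
Proof. by rewrite inE => /andP[/eqP]. Qed.

Lemma degree_gt0 {e v} : e \in edges r G -> v \in e -> 0 < degree r G v.
Proof.
move=> eE ve; rewrite /degree (bigD1 e); last by rewrite eE ve.
by rewrite ltr_pwDl ?edge_weight_gt0 // sumr_ge0 // => e' _; case: G_graph.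
Qed.

Lemma adj_entry_ge0 i : 0 <= adj_entry r G i.
Proof. by rewrite /adj_entry; case: ifP => // _; case: G_graph. Qed.

Lemma norm_adj_form_le (x : 'I_n -> R) :
  `|adj_form r G x| <= adj_form r G (fun v => `|x v|).
Proof.
apply: le_trans (ler_norm_sum _ _ _) _; apply: ler_sum => i _.
by rewrite normrM normr_prod ger0_norm ?adj_entry_ge0.
Qed.

Lemma adj_form_edges (x : 'I_n -> R) :
  adj_form r G x = r`!%:R * \sum_(e in edges r G) G e * \prod_(v in e) x v.
Proof.
rewrite /adj_form (partition_big (fun i : {ffun 'I_r -> 'I_n} => [set i k | k : 'I_r]) predT) //=.
rewrite mulr_sumr [RHS]big_mkcond /=; apply: eq_bigr => e _.
case: ifPn => [eE | eNE]; last first.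
  by apply: big1 => i /eqP im_i; rewrite /adj_entry im_i (negbTE eNE) mul0r.
have card_e := card_edge eE.
have := @card_ffun_imset_eq 'I_r _ e; rewrite card_ord => /(_ card_e) <-.
rewrite mulr_natl -sumr_const; apply: eq_big => [i | i /eqP im_i]; first by rewrite inE.
have i_inj : {in 'I_r &, injective i} by apply/imset_injP; rewrite im_i card_e card_ord.
by rewrite /adj_entry im_i eE; congr (_ * _); rewrite -im_i big_imset.
Qed.

Lemma sum_edges_div_degree_le (y : 'I_n -> R) : (forall v, 0 <= y v) ->
  \sum_(e in edges r G) G e * \sum_(v in e) y v / degree r G v <= \sum_v y v.
Proof.
move=> y_ge0; under eq_bigr do rewrite mulr_sumr.
rewrite (exchange_big_dep predT) //=; apply: ler_sum => v _.
rewrite -mulr_suml -/(degree r G v).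
have [->|d_neq0] := eqVneq (degree r G v) 0; first by rewrite mul0r.
by rewrite mulrC divfK.
Qed.

Lemma norm_adj_form_bound (x : 'I_n -> R) (t : R) :
  (0 < r)%N -> \sum_(i < n) `|x i| ^+ r = 1 -> 0 <= t ->
  (forall e, e \in edges r G -> \prod_(v in e) degree r G v <= t ^+ r) ->
  `|adj_form r G x| <= (r.-1)`!%:R * t.
Proof.
move=> r_gt0 x_unit t_ge0 deg_bound.
apply: le_trans (norm_adj_form_le x) _; rewrite adj_form_edges.
have edge_AGM e : e \in edges r G ->
    \prod_(v in e) `|x v| <= t / r%:R * \sum_(v in e) `|x v| ^+ r / degree r G v.
  move=> eE; have card_e := card_edge eE.
  rewrite -card_e; apply: AGM_prod_le_weighted_sum; rewrite ?card_e ?deg_bound //.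
  by move=> v ve; exact: degree_gt0 eE ve.
have sum_le : \sum_(e in edges r G) G e * \prod_(v in e) `|x v| <= t / r%:R.
  apply: le_trans (_ : \sum_(e in edges r G)
      G e * (t / r%:R * \sum_(v in e) `|x v| ^+ r / degree r G v) <= _).
    apply: ler_sum => e eE; apply: ler_wpM2l; last exact: edge_AGM.
    exact/ltW/edge_weight_gt0.
  under eq_bigr do rewrite mulrCA; rewrite -mulr_sumr.
  rewrite ler_piMr ?divr_ge0 // -x_unit.
  by apply: sum_edges_div_degree_le => v; rewrite exprn_ge0.
have r_neq0 : r%:R != 0 :> R by rewrite pnatr_eq0 -lt0n.
apply: le_trans (ler_wpM2l _ sum_le) _ => //.
by rewrite -(prednK r_gt0) factS natrM prednK // mulrAC mulrCA mulfV // mulr1 mulrC.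
Qed.

End WeightedGraph.

Theorem theorem28 (R : realType) (n r : nat) (G : {set 'I_n} -> R) :
  (2 <= r)%N ->
  is_weighted_rgraph r G ->
  rho r G ^+ r <=
    ((r.-1)`!)%:R ^+ r *
      \big[Num.max/0]_(e in edges r G) \prod_(v in e) degree r G v.
Proof.
move=> r_ge2 G_graph; have r_gt0 : (0 < r)%N by apply: leq_trans r_ge2.
set M := \big[Num.max/0]_(e in edges r G) _.
have [t t_ge0 tM] := @exists_nonneg_root _ M r (bigmax_ge_id _ _ _ _) r_gt0.
have /andP[rho_ge0 rho_le] : 0 <= rho r G <= (r.-1)`!%:R * t.
  apply: sup_ge0_le => [|_ [x x_unit <-]]; first by rewrite mulr_ge0.
  rewrite normr_ge0 norm_adj_form_bound // => e eE.
  by rewrite tM; apply: le_bigmax_cond.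
by rewrite -tM -exprMn lerXn2r ?nnegrE ?mulr_ge0.
Qed.
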